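(* Let $\Lambda\subseteq\mathbb{R}^d$ be a $d$-dimensional lattice with given matrix of basis vectors $U$, let $F\colon K\to\mathbb{R}$ be a $\Lambda$-periodic filter on a $\Lambda$-periodic cell complex $K$, let $m$ be the number of edges in $K/\Lambda$, and let $D$ be the maximum magnitude of their shift vectors. For every point $\Gamma$ of the periodic merge tree $\mathcal{M}(F,\Lambda)$, let $V$ be the Hermite normal form of the lattice $U^{-1}(\Lambda_\Gamma)\subseteq\mathbb{Z}^d$. Then the basis $UV$ of the periodicity lattice $\Lambda_\Gamma$ satisfies $\|V\|_\infty\le(\sqrt{d}\,Dm)^d$.
   Context: A cell complex $K$ in $\mathbb{R}^d$ is a locally finite collection of cells (each homeomorphic to a closed ball, boundaries unions of lower-dimensional cells, intersections unions of shared faces); $0$-cells are vertices, $1$-cells edges. $K$ is $\Lambda$-periodic if $\sigma+u\in K$ for $u\in\Lambda$; a filter $F$ satisfies $F(\sigma)\le F(\tau)$ for faces $\sigma$ of $\tau$ and is $\Lambda$-periodic if $F(\sigma+u)=F(\sigma)$; $K/\Lambda$ is the finite quotient complex on the torus $\mathbb{R}^d/\Lambda$, $F/\Lambda$ the quotient filter. The periodic merge tree $\mathcal{M}(F,\Lambda)$ is the merge tree of $F/\Lambda$, whose points are the connected components $\Gamma$ of the sublevel sets $(K/\Lambda)_t=(F/\Lambda)^{-1}(-\infty,t]$ (each recorded with its height $t$). For such $\Gamma$, with $\phi\colon\mathbb{R}^d\to\mathbb{R}^d/\Lambda$ the projection, a shadow is a connected component of $\phi^{-1}(\Gamma)$,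 and the periodicity lattice is $\Lambda_\Gamma=\{u\in\Lambda:\gamma+u=\gamma\}$ for some (equivalently every) shadow $\gamma$. Shift vectors: with $u_1,\dots,u_d$ the columns of $U$, for an edge of $K/\Lambda$ oriented from $x$ to $y$ let $x_0,y_0$ be the lifts of $x,y$ in the unit cell $\{\sum c_iu_i: c_i\in[0,1)\}$; a lift of the edge in $K$ has endpoints $x_0+u,y_0+w$ with $u,w\in\Lambda$, and the shift vector is $U^{-1}(w-u)\in\mathbb{Z}^d$. The magnitude $\|\cdot\|_\infty$ of an integer vector or matrix is its maximum absolute entry. The Hermite normal form of a lattice $L\subseteq\mathbb{Z}^d$ is the unique integer matrix whose columns form a basis of $L$ such that each column has strictly more leading zeros than the preceding one, the first non-zero (pivot) entry of each column is positive, and in each pivot's row all entries to the left of the pivot are non-negative and smaller than the pivot. *)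

From HB Require Import structures.
From mathcomp Require Import all_boot all_order all_algebra.
From mathcomp Require Import reals.
From Stdlib Require Import Relations.
Set Implicit Arguments. Unset Strict Implicit. Unset Printing Implicit Defensive.
Import Order.TTheory GRing.Theory Num.Theory.
Local Open Scope ring_scope.

(* ------------------------------------------------------------------------
   Combinatorial data of a Lambda-periodic cell complex K, expressed in the
   integer coordinates given by the lattice basis U (so Lambda ~ Z^d):
   - quotient vertices  : 'I_n   (the 0-cells of K/Lambda)
   - quotient edges     : 'I_m   (the 1-cells of K/Lambda), edge e oriented
                           from [src e] to [tgt e] with shift vector
                           [shift e] in Z^d (the column U^{-1}(w-u)).
   - the quotient filter F/Lambda on vertices [Fv] and edges [Fe].
   A vertex of K is a pair (x, a) : 'I_n * Z^d, standing for x_0 + U a;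
   the lifts of edge e are the edges (src e, a) -- (tgt e, a + shift e).
   ------------------------------------------------------------------------ *)

Section PeriodicGraph.
Variables (R : realType) (d n m : nat).
Variables (src tgt : 'I_m -> 'I_n) (shift : 'I_m -> 'cV[int]_d).
Variables (Fv : 'I_n -> R) (Fe : 'I_m -> R).

Definition qadj (t : R) (x y : 'I_n) : Prop :=
  exists e : 'I_m, Fe e <= t /\
    ((src e = x /\ tgt e = y) \/ (src e = y /\ tgt e = x)).

(* the connected component Gamma of (K/Lambda)_t containing the vertex x0
   (as its set of vertices; x0 is assumed to lie in the sublevel set) *)
Definition qcomp (t : R) (x0 : 'I_n) : 'I_n -> Prop :=
  fun y => clos_refl_trans _ (qadj t) x0 y.

Definition ladj (t : R) (x0 : 'I_n) (p q : 'I_n * 'cV[int]_d) : Prop :=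
  qcomp t x0 p.1 /\ qcomp t x0 q.1 /\
  exists e : 'I_m, Fe e <= t /\
    ((src e = p.1 /\ tgt e = q.1 /\ q.2 = p.2 + shift e) \/
     (src e = q.1 /\ tgt e = p.1 /\ p.2 = q.2 + shift e)).

Definition shadow (t : R) (x0 : 'I_n) (a0 : 'cV[int]_d)
  : 'I_n * 'cV[int]_d -> Prop :=
  fun q => clos_refl_trans _ (ladj t x0) (x0, a0) q.

(* U^{-1}(Lambda_Gamma) = { u in Z^d : gamma + u = gamma } *)
Definition periodicity_lattice (t : R) (x0 : 'I_n) (a0 : 'cV[int]_d)
  : 'cV[int]_d -> Prop :=
  fun u => forall q : 'I_n * 'cV[int]_d,
    (exists p, shadow t x0 a0 p /\ q = (p.1, p.2 + u)) <-> shadow t x0 a0 q.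

End PeriodicGraph.

Definition maxmag (d : nat) (v : 'cV[int]_d) : nat :=
  \max_(i < d) `|v i ord0|%N.

Definition is_basis_of (d k : nat) (L : 'cV[int]_d -> Prop)
  (V : 'M[int]_(d, k)) : Prop :=
  (forall c : 'cV[int]_k, V *m c = 0 -> c = 0) /\
  (forall u : 'cV[int]_d, L u <-> exists c : 'cV[int]_k, u = V *m c).

Definition pivot_at (d k : nat) (V : 'M[int]_(d, k)) (j : 'I_k) (i : 'I_d)
  : Prop :=
  V i j != 0 /\ forall i' : 'I_d, (i' < i)%N -> V i' j = 0.

Definition is_HNF_of (d k : nat) (L : 'cV[int]_d -> Prop)
  (V : 'M[int]_(d, k)) : Prop :=
  is_basis_of L V /\
  exists piv : 'I_k -> 'I_d,
    (forall j, pivot_at V j (piv j)) /\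
    (forall j j' : 'I_k, (j < j')%N -> (piv j < piv j')%N) /\
    (forall j, 0 < V (piv j) j) /\
    (forall j j' : 'I_k, (j' < j)%N ->
        0 <= V (piv j) j' /\ V (piv j) j' < V (piv j) j).

(* The periods of a component are the shift sums of the closed walks at x0 in
   the sublevel graph of K/Lambda.  If an additively closed set misses such a
   sum, cutting the walk at a repeated edge yields a shorter closed walk (up to
   conjugation by a path) whose sum still escapes it, so some walk using each
   of the m edges at most once does, and its sum has entries at most mD.
   Greedily this gives k independent periods V C with entries at most mD, C an
   integer matrix with det C <> 0.  On the pivot rows, the triangular block P
   of V satisfies |entry| <= det P <= |det (P C)| <= (sqrt k mD)^k by
   Hadamard's inequality.  For any row i of V, the (k+1)-square matrix with
   rows (row i V, P) times [e_j | C] is singular; expanding it along its first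
   row bounds V_ij by sqrt k (sqrt (k+1) mD)^k, again by Hadamard. *)

From HB Require Import structures.
From mathcomp Require Import all_boot all_order all_algebra.
From mathcomp Require Import reals ring zify.
From Stdlib Require Import Relations.
Import Order.TTheory GRing.Theory Num.Theory.
Local Open Scope ring_scope.
Set Implicit Arguments. Unset Strict Implicit. Unset Printing Implicit Defensive.

Section Hadamard.
Variable R : realFieldType.

Definition sqnorm n (v : 'rV[R]_n) : R := \sum_j v 0 j ^+ 2.

Lemma sqnormE n (v : 'rV[R]_n) : (v *m v^T) 0 0 = sqnorm v.
Proof. by rewrite mxE; apply: eq_bigr => j _; rewrite mxE expr2. Qed.

Lemma sqnorm_ge0 n (v : 'rV[R]_n) : 0 <= sqnorm v.
Proof. by apply: sumr_ge0 => j _; rewrite sqr_ge0. Qed.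

Lemma sqnorm_eq0 n (v : 'rV[R]_n) : sqnorm v = 0 -> v = 0.
Proof.
move=> /psumr_eq0P v0; apply/matrixP => i j; rewrite ord1 mxE.
by apply/eqP; rewrite -sqrf_eq0 v0 // => k _; apply: sqr_ge0.
Qed.

Lemma sqnormZ n a (v : 'rV[R]_n) : sqnorm (a *: v) = a ^+ 2 * sqnorm v.
Proof. by rewrite /sqnorm mulr_sumr; apply: eq_bigr => j _; rewrite mxE exprMn. Qed.

Lemma sqnormD_orth n (u v : 'rV[R]_n) :
  u *m v^T = 0 -> sqnorm (u + v) = sqnorm u + sqnorm v.
Proof.
move=> uv; have vu : v *m u^T = 0 by rewrite -(trmxK v) -trmx_mul uv trmx0.
by rewrite -!sqnormE linearD /= mulmxDl !mulmxDr uv vu addr0 add0r mxE.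
Qed.

Section GramStep.
Variables (n p : nat) (g : 'rV[R]_n) (G : 'M[R]_(p, n)).

Let gram := G *m G^T.
Let del := \det gram.
Let y := g *m G^T *m \adj gram.
(* [q] is [del] times the component of [g] orthogonal to the rows of [G]. *)
Let q := del *: g - y *m G.

Lemma gram_step_orth : q *m G^T = 0.
Proof.
rewrite /q mulmxBl -scalemxAl /y -!mulmxA -/gram mul_adj_mx.
by rewrite mul_mx_scalar -scalemxAr subrr.
Qed.

Lemma det_gram_col_mx : del != 0 ->
  del * \det (col_mx g G *m (col_mx g G)^T) = sqnorm q.
Proof.
move=> del_neq0.
have qG : G *m q^T = 0 by rewrite -(trmxK G) -trmx_mul gram_step_orth trmx0.
pose E : 'M_(1 + p) := block_mx (del%:M : 'M_1) (- y) 0 1%:M.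
have EG : E *m col_mx g G = col_mx q G.
  by rewrite mul_block_col mulNmx mul0mx add0r mul1mx mul_scalar_mx.
have detE : \det E = del by rewrite det_ublock det1 mulr1 det_mx11 mxE mulr1n.
have := congr1 (fun M => \det (M *m M^T)) EG.
rewrite /= trmx_mul mulmxA -(mulmxA E) !det_mulmx det_tr detE.
rewrite tr_col_mx mul_col_row gram_step_orth qG det_ublock det_mx11 sqnormE -/gram.
exact: mulIf.
Qed.

Lemma sqnorm_gram_step : sqnorm q <= del ^+ 2 * sqnorm g.
Proof.
have qyG : q *m (y *m G)^T = 0 by rewrite trmx_mul mulmxA gram_step_orth mul0mx.
have dg : del *: g = q + y *m G by rewrite subrK.
by rewrite -sqnormZ dg (sqnormD_orth qyG) lerDl sqnorm_ge0.
Qed.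

Lemma det_gram_col_mx_eq0 : del = 0 -> \det (col_mx g G *m (col_mx g G)^T) = 0.
Proof.
move=> /eqP /det0P [v v_neq0 v_gram]; apply/eqP/det0P.
have vG : v *m G = 0.
  by apply: sqnorm_eq0; rewrite -sqnormE trmx_mul mulmxA -(mulmxA v) v_gram mul0mx mxE.
exists (row_mx 0 v); last by rewrite mulmxA mul_row_col mul0mx add0r vG mul0mx.
by apply: contra v_neq0 => /eqP /(congr1 rsubmx); rewrite row_mxKr linear0 => ->.
Qed.

End GramStep.

Lemma det_gram_bound p n (G : 'M[R]_(p, n)) :
  0 <= \det (G *m G^T) <= \prod_(i < p) sqnorm (row i G).
Proof.
elim: p G => [|p IH] G; first by rewrite det_mx00 big_ord0 lexx ler01.
rewrite -[G](@vsubmxK _ 1 p); set g := usubmx _; set G' := dsubmx _.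
have -> : \prod_(i < 1 + p) sqnorm (row i (col_mx g G')) =
          sqnorm g * \prod_(i < p) sqnorm (row i G').
  rewrite big_split_ord big_ord1 (@rowKu _ 1) /=; congr (_ * _).
    by congr sqnorm; apply/matrixP => ? ?; rewrite !mxE !ord1.
  by apply: eq_bigr => i _; rewrite (@rowKd _ 1).
have /andP [del_ge0 del_le] := IH G'.
have [del0 | del_neq0] := eqVneq (\det (G' *m G'^T)) 0.
  by rewrite det_gram_col_mx_eq0 // lexx mulr_ge0 ?sqnorm_ge0 // (le_trans del_ge0).
have del_gt0 : 0 < \det (G' *m G'^T) by rewrite lt_def del_neq0.
have key := det_gram_col_mx g del_neq0.
apply/andP; split; first by rewrite -(pmulr_rge0 _ del_gt0) key sqnorm_ge0.
rewrite -(ler_pM2l del_gt0) key (le_trans (sqnorm_gram_step _ _)) // expr2 -mulrA.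
by rewrite ler_pM2l // mulrC ler_wpM2l ?sqnorm_ge0.
Qed.

Lemma hadamard n (A : 'M[R]_n) :
  \det A ^+ 2 <= \prod_(j < n) \sum_(i < n) A i j ^+ 2.
Proof.
have -> : \prod_(j < n) \sum_(i < n) A i j ^+ 2 = \prod_(j < n) sqnorm (row j A^T).
  by apply: eq_bigr => j _; apply: eq_bigr => i _; rewrite !mxE.
by have /andP [_] := det_gram_bound A^T; rewrite trmxK det_mulmx det_tr -expr2.
Qed.

End Hadamard.

Definition ratmx p q (A : 'M[int]_(p, q)) : 'M[rat]_(p, q) := map_mx intr A.

Lemma ratmxM p q r (A : 'M[int]_(p, q)) (B : 'M[int]_(q, r)) :
  ratmx (A *m B) = ratmx A *m ratmx B.
Proof. exact: map_mxM. Qed.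

Lemma row_free_ratmx k (A : 'M[int]_k) : row_free (ratmx A) = (\det A != 0).
Proof. by rewrite row_free_unit unitmxE unitfE det_map_mx intr_eq0. Qed.

Lemma ler_sqr_norm (R : realDomainType) (x b : R) : `|x| <= b -> x ^+ 2 <= b ^+ 2.
Proof.
move=> xb; rewrite -real_normK ?num_real // lerXn2r ?nnegrE //.
exact: le_trans xb.
Qed.

Lemma hadamard_int n (A : 'M[int]_n) :
  \det A ^+ 2 <= \prod_(j < n) \sum_(i < n) A i j ^+ 2.
Proof.
rewrite -(ler_int rat) rmorphXn /= -det_map_mx rmorph_prod /=.
apply: le_trans (hadamard _) _; rewrite le_eqVlt; apply/orP; left; apply/eqP.
by apply: eq_bigr => j _; rewrite rmorph_sum; apply: eq_bigr => i _; rewrite mxE rmorphXn.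
Qed.

Lemma det_mul_thin_int p q (A : 'M[int]_(p, q)) (B : 'M[int]_(q, p)) :
  (q < p)%N -> \det (A *m B) = 0.
Proof.
move=> lt_qp; apply/eqP; apply: contraTT lt_qp; rewrite -row_free_ratmx ratmxM.
by move=> /eqP rkAB; rewrite -leqNgt -{1}rkAB (leq_trans (mxrankM_maxl _ _)) ?rank_leq_col.
Qed.

Lemma prod_sum_sqr_le p q (A : 'M[int]_(p, q)) (M : int) :
  (forall i j, `|A i j| <= M) ->
  \prod_(j < q) \sum_(i < p) A i j ^+ 2 <= (M ^+ 2 *+ p) ^+ q.
Proof.
move=> A_le; rewrite -[q in _ ^+ q]card_ord -prodr_const.
apply: ler_prod => j _; rewrite sumr_ge0 => [|i _]; last exact: sqr_ge0.
rewrite -[p in _ *+ p]card_ord -sumr_const.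
by apply: ler_sum => i _; apply: ler_sqr_norm.
Qed.

Lemma hadamard_int_bound p (A : 'M[int]_p) (M : int) :
  (forall i j, `|A i j| <= M) -> \det A ^+ 2 <= (M ^+ 2 *+ p) ^+ p.
Proof. by move=> A_le; apply: le_trans (hadamard_int A) (prod_sum_sqr_le A_le). Qed.

Lemma hadamard_block_int k (r : 'rV[int]_k) (c : 'cV[int]_k) (A : 'M[int]_k) :
  \det (block_mx 0 r c A) ^+ 2 <=
  (\sum_(i < k) c i ord0 ^+ 2) * \prod_(j < k) \sum_(i < 1 + k) col_mx r A i j ^+ 2.
Proof.
apply: le_trans (hadamard_int _) _; rewrite big_split_ord big_ord1 block_mxEh /=.
rewrite le_eqVlt; apply/orP; left; apply/eqP; congr (_ * _).
  rewrite big_split_ord big_ord1 /= row_mxEl (@col_mxEu _ 1) mxE expr0n add0r.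
  by apply: eq_bigr => i _; rewrite row_mxEl (@col_mxEd _ 1).
by apply: eq_bigr => j _; apply: eq_bigr => i _; rewrite row_mxEr.
Qed.

Lemma det_block_corner (R : comPzRingType) k (a : R) (r : 'rV[R]_k) (c : 'cV[R]_k)
    (A : 'M[R]_k) :
  \det (block_mx a%:M r c A) = \det (block_mx 0 r c A) + a * \det A.
Proof.
have := @determinant_multilinear _ _ (block_mx a%:M r c A)
  (block_mx 0 r c A) (block_mx 1 0 c A) (lshift k ord0) 1 a.
rewrite det_lblock det1 !mul1r; apply.
- rewrite !block_mxEv !(@rowKu _ 1 k) !row_row_mx scale1r !scale_row_mx add_row_mx.
  congr row_mx; apply/matrixP => i j; rewrite !mxE ?ord1 /=.
    by rewrite add0r mulr1.
  by rewrite mulr0 addr0.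
- rewrite !block_mxEv !row'Ku (flatmx0 (row' _ (row_mx 0 r))).
  by rewrite (flatmx0 (row' _ (row_mx _ r))) ?(flatmx0 (row' _ (row_mx 1 0))).
- rewrite !block_mxEv !row'Ku (flatmx0 (row' _ (row_mx _ r))).
  by rewrite (flatmx0 (row' _ (row_mx (1 : 'M_1) (0 : 'M_(1, k))))).
Qed.

Lemma ler_expMn (x : int) a b : 1 <= x -> (a <= b)%N -> (x *+ a) ^+ a <= (x *+ b) ^+ b.
Proof.
move=> x_ge1 le_ab; have x_ge0 : 0 <= x := le_trans ler01 x_ge1.
have xn_ge1 n : (0 < n)%N -> 1 <= x *+ n.
  by move=> n_gt0; rewrite (le_trans x_ge1) // -{1}[x]mulr1n ler_wpMn2l.
case: a le_ab => [|a] le_ab; first by case: b {le_ab} => [|b]; rewrite ?expr0 ?exprn_ege1 ?xn_ge1.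
apply: le_trans (ler_weXn2l (xn_ge1 _ (leq_trans _ le_ab)) le_ab) => //.
by rewrite lerXn2r ?nnegrE ?mulrn_wge0 ?ler_wpMn2l.
Qed.

Section Walks.
Variables (d n m : nat) (src tgt : 'I_m -> 'I_n) (shift : 'I_m -> 'cV[int]_d).
Variable live : pred 'I_m.

(* A dart is an edge traversed forwards ([true]) or backwards ([false]). *)
Definition dart := ('I_m * bool)%type.
Definition dsrc (a : dart) := if a.2 then src a.1 else tgt a.1.
Definition dtgt (a : dart) := if a.2 then tgt a.1 else src a.1.
Definition dshift (a : dart) := if a.2 then shift a.1 else - shift a.1.
Definition dflip (a : dart) : dart := (a.1, ~~ a.2).

Lemma dsrc_flip a : dsrc (dflip a) = dtgt a. Proof. by case: a => ? []. Qed.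
Lemma dtgt_flip a : dtgt (dflip a) = dsrc a. Proof. by case: a => ? []. Qed.
Lemma dshift_flip a : dshift (dflip a) = - dshift a.
Proof. by case: a => ? []; rewrite /dshift /= ?opprK. Qed.

Fixpoint walk (x : 'I_n) (s : seq dart) (y : 'I_n) : Prop :=
  if s is a :: s' then [/\ live a.1, dsrc a = x & walk (dtgt a) s' y] else x = y.

Definition wsum (s : seq dart) : 'cV[int]_d := \sum_(a <- s) dshift a.

Lemma wsum_cat s1 s2 : wsum (s1 ++ s2) = wsum s1 + wsum s2.
Proof. exact: big_cat. Qed.

Lemma wsum_cons a s : wsum (a :: s) = dshift a + wsum s.
Proof. exact: big_cons. Qed.

Lemma walk_cat x s1 s2 z :
  walk x (s1 ++ s2) z <-> exists2 y, walk x s1 y & walk y s2 z.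
Proof.
elim: s1 x => [|a s1 IH] x /=; first by split; [exists x | case=> y ->].
split; first by case=> la ax /IH [y w1 w2]; exists y.
by case=> y [la ax w1] w2; split=> //; apply/IH; exists y.
Qed.

Definition wrev s := rev (map dflip s).

Lemma walk_rev x s y : walk x s y -> walk y (wrev s) x.
Proof.
elim: s x => [|a s IH] x /=; first by move->.
case=> la ax w; rewrite /wrev map_cons rev_cons -cats1.
by apply/walk_cat; exists (dtgt a); [apply: IH | rewrite /= dsrc_flip dtgt_flip ax].
Qed.

Lemma wsum_rev s : wsum (wrev s) = - wsum s.
Proof.
rewrite /wsum big_rev big_map -sumrN.
by apply: eq_bigr => a _; rewrite dshift_flip.
Qed.

Lemma walk_conj y p z c :
  walk y p z -> walk z c z -> walk y (p ++ c ++ wrev p) y.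
Proof.
move=> wp wc; apply/walk_cat; exists z => //.
by apply/walk_cat; exists z => //; apply: walk_rev.
Qed.

Lemma wsum_conj p c : wsum (p ++ c ++ wrev p) = wsum c.
Proof. by rewrite !wsum_cat wsum_rev addrCA subrr addr0. Qed.

Lemma repeated_dart (c : seq dart) : ~~ uniq (map fst c) ->
  exists c1 a1 c2 a2 c3, c = c1 ++ a1 :: c2 ++ a2 :: c3 /\ a1.1 = a2.1.
Proof.
elim: c => [|a c IH] //=; rewrite negb_and negbK.
have [/mapP [a2 + e] _ | _ /= /IH [c1 [a1 [c2 [a2 [c3 [-> e]]]]]]] := boolP (a.1 \in _).
  by case/splitPr=> c2 c3; exists [::], a, c2, a2, c3.
by exists (a :: c1), a1, c2, a2, c3.
Qed.

Lemma closed_walk_split y c : walk y c y -> ~~ uniq (map fst c) ->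
  exists c1 p z c2, [/\ walk y c1 y, walk y p z & walk z c2 z] /\
    [/\ (size c1 < size c)%N, (size c2 < size c)%N & wsum c = wsum c1 + wsum c2].
Proof.
move=> w /repeated_dart [c1 [a1 [c2 [a2 [c3 [ec e12]]]]]]; subst c.
move: w => /walk_cat [z1 w1 /= [l1 s1 /walk_cat [z2 w2 /= [l2 s2 w3]]]].
have [/eqP b12 | b12] := boolP (a2.2 == a1.2).
  have a21 : a2 = a1 by rewrite [a1]surjective_pairing [a2]surjective_pairing e12 b12.
  subst a2; exists (c1 ++ a1 :: c3), c1, z1, (a1 :: c2); do 2 split => //.
  - by apply/walk_cat; exists z1.
  - by rewrite -s2 s1 in w2; split.
  - by rewrite !size_cat /= ?size_cat /=; lia.
  - by rewrite !size_cat /= ?size_cat /=; lia.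
  - rewrite !(wsum_cat, wsum_cons).
    by apply/matrixP => i j; rewrite !mxE; ring.
have a21 : a2 = dflip a1.
  by rewrite [a2]surjective_pairing /dflip e12; move: b12; case: (a1.2); case: (a2.2).
subst a2; rewrite dsrc_flip in s2; rewrite dtgt_flip s1 in w3.
exists (c1 ++ c3), (rcons c1 a1), (dtgt a1), c2; do 2 split => //.
- by apply/walk_cat; exists z1.
- by rewrite -cats1; apply/walk_cat; exists z1.
- by rewrite {2}s2.
- by rewrite !size_cat /= ?size_cat /=; lia.
- by rewrite !size_cat /= ?size_cat /=; lia.
- rewrite !(wsum_cat, wsum_cons) dshift_flip.
  by apply/matrixP => i j; rewrite !mxE; ring.
Qed.

Definition max_shift := (\max_(e < m) maxmag (shift e))%N.

Lemma dshift_bound a i : `|dshift a i ord0| <= max_shift%:Z.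
Proof.
have le_e : (`|shift a.1 i ord0|%N <= max_shift)%N.
  exact: leq_trans (@leq_bigmax _ (fun i => `|shift a.1 i ord0|%N) i)
                   (@leq_bigmax _ (fun e => maxmag (shift e)) a.1).
by rewrite /dshift; case: a.2; rewrite ?mxE ?normrN -abszE lez_nat.
Qed.

Lemma maxmag_wsum s : (maxmag (wsum s) <= size s * max_shift)%N.
Proof.
apply/bigmax_leqP => i _; rewrite -lez_nat abszE.
elim: s => [|a s IH]; first by rewrite /wsum big_nil mxE normr0.
rewrite wsum_cons mxE /= mulSn PoszD (le_trans (ler_normD _ _)) //.
by rewrite lerD ?dshift_bound.
Qed.

(* Induction on the length: after a cut at a repeated edge one of the two
   pieces still escapes [S]; a walk without repeated edges has at most [m]
   darts. *)
Lemma closed_walk_escape (S : pred 'cV[int]_d) :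
  {in S &, forall u v, u + v \in S} ->
  forall y c, walk y c y -> wsum c \notin S ->
  exists2 c', walk y c' y & wsum c' \notin S /\ (maxmag (wsum c') <= m * max_shift)%N.
Proof.
move=> addS y c; have [N] := ubnP (size c); elim: N y c => // N IH y c.
rewrite ltnS => leN wc cS.
have [uc | /(closed_walk_split wc) [c1 [p [z [c2 [[w1 wp w2] [lt1 lt2 ec]]]]]]] :=
  boolP (uniq (map fst c)).
  have le_cm : (size c <= m)%N.
    by rewrite -(size_map fst) -(card_uniqP uc) -[X in (_ <= X)%N]card_ord max_card.
  by exists c => //; split=> //; rewrite (leq_trans (maxmag_wsum c)) ?leq_mul2r ?le_cm ?orbT.
have [c1S | c1S] := boolP (wsum c1 \in S); last exact: IH y c1 (leq_trans lt1 leN) w1 c1S.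
have c2S : wsum c2 \notin S by apply: contra cS => c2S; rewrite ec addS.
have [c' wc' c'S] := IH z c2 (leq_trans lt2 leN) w2 c2S.
by exists (p ++ c' ++ wrev p); [apply: walk_conj wc' | rewrite wsum_conj].
Qed.

End Walks.

Section PeriodicityLattice.
Variables (R : realType) (d n m : nat) (src tgt : 'I_m -> 'I_n).
Variables (shift : 'I_m -> 'cV[int]_d) (Fe : 'I_m -> R) (t : R).
Variables (x0 : 'I_n) (a0 : 'cV[int]_d).

Let live := [pred e | Fe e <= t].
Local Notation walk := (walk src tgt live).
Local Notation dsrc := (dsrc src tgt).
Local Notation dtgt := (dtgt src tgt).
Local Notation dshift := (dshift shift).
Local Notation wsum := (wsum shift).
Local Notation qcomp := (qcomp src tgt Fe t x0).
Local Notation ladj := (ladj src tgt shift Fe t x0).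
Local Notation shadow := (shadow src tgt shift Fe t x0 a0).

Lemma shadow_walk q : shadow q -> exists2 s, walk x0 s q.1 & q.2 = a0 + wsum s.
Proof.
move=> /clos_rt_rtn1_iff; elim=> [|p {}q [_ [_ [e [le_et ep]]]] _ [s ws p2]].
  by exists [::]; rewrite // /wsum big_nil addr0.
have wse b : dsrc (e, b) = p.1 -> walk x0 (rcons s (e, b)) (dtgt (e, b)).
  by move=> ep1; rewrite -cats1; apply/walk_cat; exists p.1.
have wsumE b : wsum (rcons s (e, b)) = wsum s + dshift (e, b).
  by rewrite -cats1 wsum_cat wsum_cons /wsum big_nil addr0.
have [[sp [tq ->]] | [sq [tp pq]]] := ep.
  exists (rcons s (e, true)); first by rewrite -tq; exact: wse true sp.
  by rewrite wsumE p2 addrA.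
exists (rcons s (e, false)); first by rewrite -sq; exact: wse false tp.
by rewrite wsumE addrA -p2 pq addrK.
Qed.

Lemma walk_ladj x a s y : qcomp x -> walk x s y ->
  clos_refl_trans _ ladj (x, a) (y, a + wsum s).
Proof.
elim: s x a => [|b s IH] x a /= xG; first by move=> ->; rewrite /wsum big_nil addr0; apply: rt_refl.
case=> lb bx ws; rewrite wsum_cons addrA.
have bG : qcomp (dtgt b).
  apply: rt_trans xG (rt_step _ _ _ _ _); exists b.1; split => //.
  by move: bx; rewrite /dsrc /dtgt; case: b.2 => <-; [left | right].
apply: rt_trans (rt_step _ _ _ (dtgt b, a + dshift b) _) (IH _ _ bG ws).
split=> //; split=> //; exists b.1; split=> //.
by move: bx; rewrite /dsrc /dtgt /dshift; case: b.2 => <- /=; [left | right; rewrite subrK].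
Qed.

Lemma walk_shadow s y : walk x0 s y -> shadow (y, a0 + wsum s).
Proof. exact/walk_ladj/rt_refl. Qed.

Lemma periodicity_latticeP u :
  periodicity_lattice src tgt shift Fe t x0 a0 u <-> exists2 c, walk x0 c x0 & u = wsum c.
Proof.
split=> [Lu | [c wc ->] [y b]].
  have /shadow_walk [c wc /addrI ->] : shadow (x0, a0 + u).
    by apply/Lu; exists (x0, a0); split=> //; apply: rt_refl.
  by exists c.
split=> [[[z p2] [/shadow_walk [s /= ws ->] [-> ->]]] | /shadow_walk [s /= ws ->]].
  by rewrite -addrA [wsum s + _]addrC -wsum_cat; apply: walk_shadow; apply/walk_cat; exists x0.
exists (y, a0 + wsum (wrev c ++ s)); split.
  by apply: walk_shadow; apply/walk_cat; exists x0 => //; apply: walk_rev.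
by rewrite wsum_cat wsum_rev /= [- _ + _]addrC -addrA subrK.
Qed.

Lemma short_period_vector (S : pred 'cV[int]_d) :
  {in S &, forall u v, u + v \in S} ->
  forall u, periodicity_lattice src tgt shift Fe t x0 a0 u -> u \notin S ->
  exists2 w, periodicity_lattice src tgt shift Fe t x0 a0 w &
    w \notin S /\ (maxmag w <= m * max_shift shift)%N.
Proof.
move=> addS u /periodicity_latticeP [c wc ->] cS.
have [c' wc' [c'S c'_short]] := closed_walk_escape addS wc cS.
by exists (wsum c') => //; apply/periodicity_latticeP; exists c'.
Qed.

End PeriodicityLattice.

Section ShortBasis.
Variables (d k M : nat) (L : 'cV[int]_d -> Prop) (V : 'M[int]_(d, k)).
Hypothesis V_basis : is_basis_of L V.
Hypothesis rank_V : (k <= \rank (ratmx V^T))%N.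
Hypothesis L_short : forall S : pred 'cV[int]_d, {in S &, forall u v, u + v \in S} ->
  forall u, L u -> u \notin S -> exists2 w, L w & w \notin S /\ (maxmag w <= M)%N.

Lemma mem_basis_col b : L (col b V).
Proof. by apply/V_basis.2; exists (delta_mx b 0); rewrite colE. Qed.

Lemma short_row_extend s (W : 'M[int]_(s, d)) : (\rank (ratmx W) < k)%N ->
  exists2 w, L w & ~~ ((ratmx w)^T <= ratmx W)%MS /\ (maxmag w <= M)%N.
Proof.
move=> rkW; pose S := [pred u : 'cV[int]_d | ((ratmx u)^T <= ratmx W)%MS].
have addS : {in S &, forall u v, u + v \in S}.
  by move=> u v; rewrite !inE /ratmx raddfD /= linearD; apply: addmx_sub.
have /existsP [b Sb] : [exists b, col b V \notin S].
  apply: contraLR rkW => /existsPn VS; rewrite -leqNgt (leq_trans rank_V) // mxrankS //.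
  apply/row_subP => b; have := VS b; rewrite negbK inE.
  by congr (_ <= _)%MS; apply/matrixP => ? ?; rewrite !mxE.
exact: L_short addS _ (mem_basis_col b) Sb.
Qed.

Lemma short_independent_rows s : (s <= k)%N -> exists W : 'M[int]_(s, d),
  [/\ forall b, L (row b W)^T, forall b i, (`|W b i|%N <= M)%N & \rank (ratmx W) = s].
Proof.
elim: s => [_ | s IH lt_sk].
  exists 0; split=> [[] | [] | ] //.
  by apply/eqP; rewrite -leqn0 rank_leq_row.
have [W [L_W W_short rkW]] := IH (ltnW lt_sk).
have [w Lw [wW w_short]] : exists2 w, L w &
    ~~ ((ratmx w)^T <= ratmx W)%MS /\ (maxmag w <= M)%N.
  by apply: short_row_extend; rewrite rkW.
have wTE : (row 0 w^T)^T = w by apply/matrixP => i j; rewrite !mxE !ord1.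
exists (col_mx w^T W : 'M_(1 + s, d)); split.
- move=> b; case: (@split_ordP 1 s b) => b' ->; last by rewrite (@rowKd _ 1 s).
  by rewrite (@rowKu _ 1 s) ord1 wTE.
- move=> b i; case: (@split_ordP 1 s b) => b' ->;
    rewrite ?(@col_mxEu _ 1 s) ?(@col_mxEd _ 1 s) //.
  by rewrite mxE ord1 (leq_trans _ w_short) // (@leq_bigmax _ (fun i => `|w i ord0|%N)).
have ltW : (ratmx W < ratmx (col_mx w^T W))%MS.
  by rewrite /ratmx map_col_mx ltmxE -addsmxE addsmxSr col_mx_sub -map_trmx (negbTE wW).
have := rank_ltmx ltW; rewrite rkW => rk_gt.
by apply/eqP; rewrite eqn_leq rank_leq_row.
Qed.

Lemma short_basis_change : exists2 C : 'M[int]_k,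
  \det C != 0 & forall i b, `|(V *m C) i b| <= M%:Z.
Proof.
have [W [L_W W_short rkW]] := short_independent_rows (leqnn k).
have /fin_all_exists [coord coordE] b : exists c, (row b W)^T = V *m c.
  exact/V_basis.2/L_W.
pose C : 'M[int]_k := \matrix_(a, b) coord b a 0.
have WE : W^T = V *m C.
  apply/matrixP => i b; rewrite !mxE; move/matrixP: (coordE b) => /(_ i 0).
  by rewrite !mxE => ->; apply: eq_bigr => a _; rewrite mxE.
exists C => [|i b]; last by rewrite -WE mxE -abszE lez_nat.
rewrite -row_free_ratmx /row_free eqn_leq rank_leq_row -{1}rkW.
by rewrite -mxrank_tr /ratmx map_trmx WE map_mxM mxrankM_maxr.
Qed.

End ShortBasis.

Section HermiteNormalForm.
Variables (d k : nat) (V : 'M[int]_(d, k)) (piv : 'I_k -> 'I_d).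
Hypothesis V_piv : forall j, pivot_at V j (piv j).
Hypothesis piv_mono : forall j j' : 'I_k, (j < j')%N -> (piv j < piv j')%N.
Hypothesis V_piv_gt0 : forall j, 0 < V (piv j) j.
Hypothesis V_piv_left : forall j j' : 'I_k, (j' < j)%N ->
  0 <= V (piv j) j' /\ V (piv j) j' < V (piv j) j.

Lemma piv_inj : injective piv.
Proof.
move=> a b eq_ab; case: (ltngtP a b) => [/piv_mono | /piv_mono | /val_inj //].
  by rewrite eq_ab ltnn.
by rewrite eq_ab ltnn.
Qed.

Lemma card_piv_le : (k <= d)%N.
Proof. by have := leq_card piv piv_inj; rewrite !card_ord. Qed.

Lemma card_piv_lt i : (forall a, piv a != i) -> (k < d)%N.
Proof.
move=> no_i; have i_notin : i \notin [set piv a | a in 'I_k].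
  by apply/imsetP => -[a _ ia]; have := no_i a; rewrite -ia eqxx.
have := max_card (mem (i |: [set piv a | a in 'I_k])).
by rewrite cardsU1 i_notin card_imset ?card_ord //; apply: piv_inj.
Qed.

Definition pivmx : 'M[int]_k := \matrix_(a, b) V (piv a) b.

Lemma V_piv_upper (a b : 'I_k) : (a < b)%N -> V (piv a) b = 0.
Proof. by move=> lt_ab; apply: (V_piv b).2; apply: piv_mono. Qed.

Lemma det_pivmx : \det pivmx = \prod_a V (piv a) a.
Proof.
rewrite det_trig; first by apply: eq_bigr => a _; rewrite mxE.
by apply/is_trig_mxP => a b lt_ab; rewrite mxE V_piv_upper.
Qed.

Lemma det_pivmx_gt0 : 0 < \det pivmx.
Proof. by rewrite det_pivmx; apply: prodr_gt0 => a _. Qed.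

Lemma pivot_row_le_det (a b : 'I_k) : `|V (piv a) b| <= \det pivmx.
Proof.
apply: (@le_trans _ _ (V (piv a) a)).
  case: (ltngtP a b) => [lt_ab | lt_ba | /val_inj ->]; last by rewrite gtr0_norm.
    by rewrite V_piv_upper // normr0 ltW.
  by have [ge0 lt] := V_piv_left lt_ba; rewrite ger0_norm // ltW.
rewrite det_pivmx (bigD1 a) //= ler_peMr ?(ltW (V_piv_gt0 a)) //.
by apply: (big_ind (fun x : int => 1 <= x)) => // [x y|c _]; [apply: mulr_ege1 | rewrite -gtz0_ge1].
Qed.

Lemma HNF_rank : (k <= \rank (ratmx V^T))%N.
Proof.
have pivmxT : pivmx^T = V^T *m \matrix_(r, a) (r == piv a)%:R.
  apply/matrixP => b a; rewrite !mxE (bigD1 (piv a)) //= big1 => [|r /negbTE ra].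
    by rewrite !mxE eqxx mulr1 addr0.
  by rewrite !mxE ra mulr0.
have /eqP rk_pivmx : row_free (ratmx pivmx^T).
  by rewrite row_free_ratmx det_tr gt_eqF ?det_pivmx_gt0.
by rewrite -{1}rk_pivmx pivmxT ratmxM mxrankM_maxl.
Qed.

Section ShortBasisChange.
Variables (M : nat) (C : 'M[int]_k).
Hypothesis det_C : \det C != 0.
Hypothesis VC_short : forall i b, `|(V *m C) i b| <= M%:Z.

Let W := pivmx *m C.

Lemma pivot_rows_short a b : `|W a b| <= M%:Z.
Proof.
rewrite (_ : W a b = (V *m C) (piv a) b) //.
by rewrite !mxE; apply: eq_bigr => c _; rewrite mxE.
Qed.

Lemma sqr_det_pivmx_le : \det pivmx ^+ 2 <= \det W ^+ 2.
Proof.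
rewrite -[X in _ <= X]real_normK ?num_real //; apply: ler_sqr_norm.
rewrite (gtr0_norm det_pivmx_gt0) det_mulmx normrM (gtr0_norm det_pivmx_gt0).
rewrite ler_peMr ?(ltW det_pivmx_gt0) //.
by rewrite -gtz0_ge1 normr_gt0.
Qed.

Lemma short_bound_gt0 : (0 < k)%N -> (0 < M)%N.
Proof.
move=> k_gt0; rewrite lt0n; apply: contraTneq sqr_det_pivmx_le => M0.
have W0 : W = 0 *: W.
  apply/matrixP => a b; rewrite [RHS]mxE mul0r; apply/eqP.
  by rewrite -normr_le0 (le_trans (pivot_rows_short a b)) ?M0.
rewrite -ltNge W0 detZ expr0n (negbTE (lt0n_neq0 k_gt0)) mul0r expr0n /=.
by rewrite exprn_gt0 ?det_pivmx_gt0.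
Qed.

Lemma pivot_entry_sqr_le a j : V (piv a) j ^+ 2 <= (M%:Z ^+ 2 *+ k) ^+ k.
Proof.
apply: le_trans (hadamard_int_bound pivot_rows_short).
apply: le_trans sqr_det_pivmx_le; apply: ler_sqr_norm.
by rewrite (le_trans (pivot_row_le_det a j)) ?ler_norm.
Qed.

Lemma sqr_det_W_gt0 : 0 < \det W ^+ 2.
Proof. by apply: lt_le_trans sqr_det_pivmx_le; rewrite exprn_gt0 ?det_pivmx_gt0. Qed.

Lemma det_row_block_eq0 i j :
  \det (block_mx (V i j)%:M (row i (V *m C)) (col j pivmx) W) = 0.
Proof.
rewrite (_ : block_mx _ _ _ _ = col_mx (row i V) pivmx *m row_mx (delta_mx j 0) C).
  by apply: det_mul_thin_int.
rewrite mul_col_row; congr block_mx; [|exact: row_mul | exact: colE].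
by rewrite -colE; apply/matrixP => x y; rewrite !mxE [x]ord1 [y]ord1 eqxx mulr1n.
Qed.

(* Expanding the singular matrix of [det_row_block_eq0] along its first row
   writes [V i j * \det W] as a determinant that Hadamard's inequality bounds
   by [sqrt k * |\det W| * T ^ (k / 2)]. *)
Lemma entry_sqr_le_succ i j : V i j ^+ 2 <= (M%:Z ^+ 2 *+ k.+1) ^+ k.+1.
Proof.
set T := M%:Z ^+ 2 *+ k.+1.
have M_ge1 : 1 <= M%:Z by rewrite lez_nat short_bound_gt0 // (leq_ltn_trans _ (ltn_ord j)).
have le_kT : k%:R <= T.
  by apply: (@le_trans _ _ (1 *+ k.+1)); rewrite ?ler_nat // lerMn2r exprn_ege1 ?orbT.
have c_le a : col j pivmx a 0 ^+ 2 <= \det W ^+ 2.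
  by rewrite !mxE; apply: le_trans (ler_sqr_norm (pivot_row_le_det a j)) sqr_det_pivmx_le.
have rW_short a b : `|col_mx (row i (V *m C)) W a b| <= M%:Z.
  by case: (@split_ordP 1 k a) => a' ->; [rewrite col_mxEu mxE | rewrite col_mxEd pivot_rows_short].
have det_block : \det (block_mx 0 (row i (V *m C)) (col j pivmx) W) = - (V i j * \det W).
  by apply/eqP; rewrite -addr_eq0 -det_block_corner det_row_block_eq0.
have hadamard_VW := hadamard_block_int (row i (V *m C)) (col j pivmx) W.
rewrite det_block sqrrN exprMn in hadamard_VW.
have sum_le : \sum_(a < k) col j pivmx a 0 ^+ 2 <= \det W ^+ 2 *+ k.
  by rewrite -[k in _ *+ k]card_ord -sumr_const; apply: ler_sum => a _; apply: c_le.
have := prod_sum_sqr_le rW_short; rewrite -/T => prod_le.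
have sqr_sum_ge0 p q (A : 'M[int]_(p, q)) b : 0 <= \sum_(a < p) A a b ^+ 2.
  by apply: sumr_ge0 => a _; apply: sqr_ge0.
have := le_trans hadamard_VW (ler_pM (sqr_sum_ge0 _ _ (col j pivmx) 0)
  (prodr_ge0 _ (fun b _ => sqr_sum_ge0 _ _ _ b)) sum_le prod_le).
rewrite mulrnAl mulrC -mulrnAr ler_pM2l ?sqr_det_W_gt0 // => /le_trans; apply.
rewrite exprSr -mulr_natr ler_wpM2l ?exprn_ge0 //.
exact: le_trans (ler0n _ k) le_kT.
Qed.

Lemma HNF_entry_sqr_le i j : V i j ^+ 2 <= (M%:Z ^+ 2 *+ d) ^+ d.
Proof.
have M2_ge1 : 1 <= M%:Z ^+ 2.
  by rewrite exprn_ege1 // lez_nat short_bound_gt0 // (leq_ltn_trans _ (ltn_ord j)).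
case: (boolP [exists a, piv a == i]) => [/existsP [a /eqP <-] | /existsPn no_piv].
  exact: le_trans (pivot_entry_sqr_le a j) (ler_expMn M2_ge1 card_piv_le).
exact: le_trans (entry_sqr_le_succ i j) (ler_expMn M2_ge1 (card_piv_lt no_piv)).
Qed.

End ShortBasisChange.
End HermiteNormalForm.

Lemma norm_int_le_sqrt_exp (R : rcfType) (x : int) (M d : nat) :
  x ^+ 2 <= (M%:Z ^+ 2 *+ d) ^+ d -> (`|x|%:~R : R) <= (Num.sqrt d%:R * M%:R) ^+ d.
Proof.
move=> le_x; rewrite -ler_sqr ?nnegrE ?exprn_ge0 ?ler0z ?normr_ge0 ?mulr_ge0 ?sqrtr_ge0 ?ler0n //.
rewrite [X in _ <= X]exprAC [(_ * M%:R) ^+ 2]exprMn sqr_sqrtr ?ler0n //.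
have -> : d%:R * M%:R ^+ 2 = ((M%:Z ^+ 2 *+ d)%:~R : R) by rewrite rmorphMn rmorphXn mulr_natl.
by rewrite -[X in X <= _]rmorphXn -[X in _ <= X]rmorphXn /= ler_int real_normK ?num_real.
Qed.

Unset Implicit Arguments.

Theorem mainTheorem9 (R : realType) (d n m : nat)
  (src tgt : 'I_m -> 'I_n) (shift : 'I_m -> 'cV[int]_d)
  (Fv : 'I_n -> R) (Fe : 'I_m -> R)
  (hF : forall e : 'I_m, Fv (src e) <= Fe e /\ Fv (tgt e) <= Fe e)
  (D : nat) (hD : D = (\max_(e < m) maxmag (shift e))%N)
  (t : R) (x0 : 'I_n) (hx0 : Fv x0 <= t) (a0 : 'cV[int]_d)
  (k : nat) (V : 'M[int]_(d, k))
  (hV : is_HNF_of (periodicity_lattice src tgt shift Fe t x0 a0) V) :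
  forall (i : 'I_d) (j : 'I_k),
    ((`|V i j|)%:~R : R) <= (Num.sqrt (d%:R) * D%:R * m%:R) ^+ d.
Proof.
move=> i j; case: hV => V_basis [piv [V_piv [piv_mono [V_piv_gt0 V_piv_left]]]].
have [C det_C VC_short] := short_basis_change V_basis (HNF_rank V_piv piv_mono V_piv_gt0)
  (@short_period_vector R d n m src tgt shift Fe t x0 a0).
rewrite -mulrA -natrM hD mulnC; apply: norm_int_le_sqrt_exp.
exact: (HNF_entry_sqr_le V_piv piv_mono V_piv_gt0 V_piv_left det_C VC_short).
Qed.
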